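(* Let $(M,\mathbf g)$ be a $(d+1)$-dimensional spacetime with metric $$\mathbf g=g_{tt}(r)\,\mathbf dt^2+g_{rr}(r)\,\mathbf dr^2+r^2\{\mathbf d\theta^2+s(\theta)^2\mathbf d\Omega_{(d-2)}^2\},$$ where $g_{tt}<0$ and $g_{rr}>0$ are smooth, $\mathbf d\Omega_{(d-2)}^2$ is the metric of the unit $(d-2)$-sphere, and $s(\theta)=\sin\theta$, $\theta$, or $\sinh\theta$. Let $S=\{r=r_p\}$, a timelike hypersurface, let $p\in S$, and let $\boldsymbol\sigma_{\boldsymbol\chi}$ be the trace-free part of the second fundamental form of $S$. Then for any nonzero vectors $\mathbf X,\mathbf Y\in T_pS$: $\boldsymbol\sigma_{\boldsymbol\chi}(\mathbf X,\mathbf X)=0$ iff $\boldsymbol\sigma_{\boldsymbol\chi}(\mathbf Y,\mathbf Y)=0$; $\boldsymbol\sigma_{\boldsymbol\chi}(\mathbf X,\mathbf X)>0$ iff $\boldsymbol\sigma_{\boldsymbol\chi}(\mathbf Y,\mathbf Y)>0$; and $\boldsymbol\sigma_{\boldsymbol\chi}(\mathbf X,\mathbf X)<0$ iff $\boldsymbol\sigma_{\boldsymbol\chi}(\mathbf Y,\mathbf Y)<0$.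
   Context: For a hypersurface $S$ with unit normal $\bar{\mathbf m}$ and induced metric $\mathbf h$, the second fundamental form is $\boldsymbol\chi(X,Y)=\mathbf g(\nabla_X\bar{\mathbf m},Y)$ for $X,Y$ tangent to $S$; the mean curvature is $H=\frac1d\mathrm{tr}_{\mathbf h}\boldsymbol\chi$ and the trace-free part is $\boldsymbol\sigma_{\boldsymbol\chi}=\boldsymbol\chi-H\mathbf h$. *)

From HB Require Import structures.
From mathcomp Require Import all_boot all_order all_algebra.
From mathcomp Require Import all_classical all_reals all_analysis.

Set Implicit Arguments.
Unset Strict Implicit.
Unset Printing Implicit Defensive.

Import Order.TTheory GRing.Theory Num.Theory.
Import numFieldNormedType.Exports.
Local Open Scope ring_scope.

Definition sinhR (R : realType) (x : R) : R := (expR x - expR (- x)) / 2.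

Definition smooth_fun (R : realType) (f : R -> R) : Prop :=
  forall (n : nat) (x : R), derivable (derive1n n f) x 1.

Definition coord_vec (R : realType) (n : nat) (k : 'I_n) : 'rV[R]_n :=
  delta_mx 0 k.
Arguments coord_vec {R n}.

Definition dmetric (R : realType) (n : nat) (G : 'rV[R]_n -> 'M[R]_n)
    (k : 'I_n) (x : 'rV[R]_n) (i j : 'I_n) : R :=
  derive (fun y => G y i j) x (coord_vec k).

Definition christoffel (R : realType) (n : nat) (G : 'rV[R]_n -> 'M[R]_n)
    (x : 'rV[R]_n) (mu nu la : 'I_n) : R :=
  2^-1 * \sum_(sg < n) (invmx (G x)) mu sg *
     (dmetric G nu x sg la + dmetric G la x sg nu - dmetric G sg x nu la).

Definition gprod (R : realType) (n : nat) (G : 'rV[R]_n -> 'M[R]_n)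
    (x : 'rV[R]_n) (U W : 'rV[R]_n) : R :=
  \sum_(i < n) \sum_(j < n) U 0 i * G x i j * W 0 j.

Definition covD (R : realType) (n : nat) (G : 'rV[R]_n -> 'M[R]_n)
    (V : 'rV[R]_n -> 'rV[R]_n) (x X : 'rV[R]_n) : 'rV[R]_n :=
  derive V x X +
  \row_mu \sum_(nu < n) \sum_(la < n) christoffel G x mu nu la * X 0 nu * V x 0 la.

(** Unit normal field to the level hypersurfaces {x_k = const}:
    the g-gradient of the coordinate x_k, normalised (g(m,m) = 1). *)
Definition level_normal (R : realType) (n : nat) (G : 'rV[R]_n -> 'M[R]_n)
    (k : 'I_n) (x : 'rV[R]_n) : 'rV[R]_n :=
  (Num.sqrt ((invmx (G x)) k k))^-1 *: \row_mu (invmx (G x)) mu k.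

Definition tangent_level (R : realType) (n : nat) (k : 'I_n) (X : 'rV[R]_n) :=
  X 0 k = 0.
Arguments tangent_level {R n}.

Definition sff (R : realType) (n : nat) (G : 'rV[R]_n -> 'M[R]_n)
    (k : 'I_n) (p X Y : 'rV[R]_n) : R :=
  gprod G p (covD G (level_normal G k) p X) Y.

(** Mean curvature H = (1/d) tr_h chi of the d-dimensional hypersurface
    {x_k = x_k(p)} in a (d+1)-dimensional chart, computed in the coordinate
    basis (d_a)_{a <> k} of T_pS, where h_{ab} = g(d_a, d_b). *)
Definition mean_curv (R : realType) (d : nat) (G : 'rV[R]_d.+1 -> 'M[R]_d.+1)
    (k : 'I_d.+1) (p : 'rV[R]_d.+1) : R :=
  (d%:R)^-1 *
  \tr (invmx (\matrix_(a < d, b < d) G p (lift k a) (lift k b)) *m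
       \matrix_(a < d, b < d) sff G k p (coord_vec (lift k a)) (coord_vec (lift k b))).

Definition tf_sff (R : realType) (d : nat) (G : 'rV[R]_d.+1 -> 'M[R]_d.+1)
    (k : 'I_d.+1) (p X Y : 'rV[R]_d.+1) : R :=
  sff G k p X Y - mean_curv G k p * gprod G p X Y.

(** * The spacetime metric in coordinates
    x = (t, r, theta, phi_1, ..., phi_{d-2}) (indices 0,1,2,3..d):
    g = g_tt(r) dt^2 + g_rr(r) dr^2
        + r^2 (dtheta^2 + s(theta)^2 dOmega_{d-2}^2),
    with dOmega_{d-2}^2 = dphi_1^2 + sin^2 phi_1 dphi_2^2 + ...
    the round unit (d-2)-sphere metric in standard spherical coordinates. *)
Definition warped_entry (R : realType) (d : nat) (gtt grr s : R -> R)
    (x : 'rV[R]_d.+1) (i : 'I_d.+1) : R :=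
  let r := x 0 (inord 1) in
  let th := x 0 (inord 2) in
  if (i == 0%N :> nat) then gtt r
  else if (i == 1%N :> nat) then grr r
  else if (i == 2%N :> nat) then r ^+ 2
  else r ^+ 2 * s th ^+ 2 * \prod_(3 <= j < i) (sin (x 0 (inord j))) ^+ 2.

Definition warped_metric (R : realType) (d : nat) (gtt grr s : R -> R)
    (x : 'rV[R]_d.+1) : 'M[R]_d.+1 :=
  \matrix_(i, j) (if i == j then warped_entry gtt grr s x i else 0).

(* The metric is diagonal and g_rr depends on r only, so the second fundamental form of
   {r = r_p} is diagonal in the coordinate basis: chi_ii = lambda_i g_ii with principal
   curvatures lambda_i = g_rr^(-1/2) d_r g_ii / (2 g_ii).  Every angular entry g_ii is r^2
   times a function of the angles, so all angular principal curvatures equal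
   kappa = g_rr^(-1/2) / r_p, and only the time direction has its own lambda_t.  With
   H = (lambda_t + (d - 1) kappa) / d this gives
     sigma_chi(X, X) = (kappa - lambda_t) / d
                       * (-(d - 1) g_tt X_t^2 + sum_angular g_ii X_i^2),
   a fixed multiple of a form that is positive definite on T_pS. *)

From HB Require Import structures.
From mathcomp Require Import all_boot all_order all_algebra.
From mathcomp Require Import all_classical all_reals all_analysis.
From mathcomp Require Import ring zify.
Set Implicit Arguments.
Unset Strict Implicit.
Unset Printing Implicit Defensive.

Import Order.TTheory GRing.Theory Num.Theory.
Import numFieldNormedType.Exports.
Local Open Scope ring_scope.

Lemma sum_if_eq (R : nmodType) n (F : 'I_n -> R) i :
  \sum_(j < n) (if i == j then F j else 0) = F i.
Proof. by rewrite -big_mkcond (big_pred1 i) // => j; rewrite eq_sym. Qed.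

Definition diagf (R : fieldType) n (e : 'I_n -> R) : 'M[R]_n :=
  \matrix_(i, j) (if i == j then e i else 0).

Section DiagonalMatrices.
Variables (R : fieldType) (n : nat).
Implicit Types e f : 'I_n -> R.

Lemma mul_diagf e f : diagf e *m diagf f = diagf (fun i => e i * f i).
Proof.
apply/matrixP => i j; rewrite !mxE.
rewrite (eq_bigr (fun l => if i == l then (if i == j then e i * f i else 0) else 0)).
  by rewrite sum_if_eq.
move=> l _; rewrite !mxE; case: eqP => [<-|]; last by rewrite mul0r.
by case: eqP => _; rewrite ?mulr0.
Qed.

Lemma invmx_diagf e : (forall i, e i != 0) ->
  invmx (diagf e) = diagf (fun i => (e i)^-1).
Proof.
move=> e0; have eeV : diagf e *m diagf (fun i => (e i)^-1) = 1%:M.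
  rewrite mul_diagf; apply/matrixP => i j; rewrite !mxE.
  by case: eqP => [->|]; rewrite ?mulfV.
have [e_unit _] := mulmx1_unit eeV.
by rewrite -[RHS](mulKmx e_unit) eeV mulmx1.
Qed.

Lemma mxtrace_diagf e : \tr (diagf e) = \sum_i e i.
Proof. by apply: eq_bigr => i _; rewrite mxE eqxx. Qed.

End DiagonalMatrices.

Lemma sum_wsqr_gt0 (R : realDomainType) n (w : 'I_n -> R) (Z : 'rV[R]_n) :
  (forall i, 0 < w i) -> Z != 0 -> 0 < \sum_i w i * Z 0 i ^+ 2.
Proof.
move=> w_gt0 Z0; have wZ_ge0 i : 0 <= w i * Z 0 i ^+ 2.
  exact: mulr_ge0 (ltW (w_gt0 i)) (sqr_ge0 _).
rewrite lt0r sumr_ge0 // andbT; apply: contra Z0 => /eqP wZ0.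
apply/eqP/rowP => i; rewrite mxE.
have /eqP := psumr_eq0P (fun j _ => wZ_ge0 j) wZ0 (i := i) isT.
by rewrite mulf_eq0 gt_eqF //= sqrf_eq0 => /eqP.
Qed.

Lemma pmulr_sign_iff (R : numDomainType) (D a b : R) : 0 < a -> 0 < b ->
  [/\ D * a = 0 <-> D * b = 0, 0 < D * a <-> 0 < D * b
    & D * a < 0 <-> D * b < 0].
Proof.
move=> a_gt0 b_gt0; rewrite !pmulr_lgt0 // !pmulr_llt0 //; split=> //.
by split=> /eqP; rewrite mulf_eq0 ?(gt_eqF a_gt0) ?(gt_eqF b_gt0) orbF => /eqP ->;
  rewrite mul0r.
Qed.

Section RealCalculus.
Variable R : realType.

Lemma derive_near_const (V W : normedModType R) (f : V -> W) a v :
  (\forall h \near 0 : R, f (h *: v + a) = f a) -> derive f a v = 0.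
Proof.
move=> fa; rewrite /derive; apply: (cvg_lim (@norm_hausdorff _ W)).
have cst0 : ((fun _ : R => (0 : W)) @ 0^' --> (0 : W))%classic by apply: cvg_cst.
apply: cvg_trans cst0; apply: near_eq_cvg.
by apply: filterS (nbhs_dnbhs fa) => h /= ->; rewrite subrr scaler0.
Qed.

Lemma derive_line (V : normedModType R) (f : V -> R^o) a v :
  derive f a v = derive (fun h : R => f (h *: v + a)) 0 1.
Proof.
rewrite /derive /= scale0r add0r.
suff -> : (fun h : R => h^-1 *: (f ((h%:A + 0) *: v + a) - f a)) =
  (fun h : R => h^-1 *: (f (h *: v + a) - f a)) by [].
by apply: funext => h /=; rewrite addr0 [h%:A]mulr1.
Qed.

Lemma derive_line_sqr (V : normedModType R) (f : V -> R^o) a v (r C : R) :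
  (forall h : R, f (h *: v + a) = (h + r) ^+ 2 * C) -> derive f a v = 2 * r * C.
Proof.
move=> fE; rewrite derive_line.
have -> : (fun h : R => f (h *: v + a)) = (fun h : R => (h + r) ^+ 2 * C : R^o).
  by apply: funext => h; rewrite fE.
have D : is_derive (0 : R) (1 : R) (fun h : R => (h + r) ^+ 2 * C : R^o) (2 * r * C).
  apply: is_derive_eq; rewrite !(add0r, addr0, scaler0, scaler1).
  change (C * (r + r) = 2 * r * C :> R); ring.
exact: derive_val.
Qed.

Lemma near_line_neq0 (g : R -> R) (a c : R) :
  continuous g -> g c != 0 -> \forall h \near 0 : R, g (h * a + c) != 0.
Proof.
move=> g_cont gc; have g_line : (g (h * a + c) @[h --> 0] --> g c)%classic.
  have -> : g c = g (0 * a + c) by rewrite mul0r add0r.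
  apply: (@continuous_comp _ _ _ (fun h : R => h * a + c) g 0); last exact: g_cont.
  by apply: cvgD; [apply: cvgMl; exact: cvg_id | exact: cvg_cst].
exact: cvgr_neq0 g_line gc.
Qed.

Lemma continuous_sinhR : continuous (@sinhR R).
Proof.
move=> x; apply: cvgM; last exact: cvg_cst.
apply: cvgB; first exact: continuous_expR.
apply: (continuous_comp (f := -%R)); last exact: continuous_expR.
by apply: cvgN; exact: cvg_id.
Qed.

End RealCalculus.

Definition diag_metric (R : realType) n (e : 'rV[R]_n -> 'I_n -> R) (y : 'rV[R]_n) :
  'M[R]_n := diagf (e y).

Definition normal_coef (R : realType) n (e : 'rV[R]_n -> 'I_n -> R) (k : 'I_n)
  (y : 'rV[R]_n) : R := (Num.sqrt (e y k)^-1)^-1 * (e y k)^-1.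

Definition principal_curv (R : realType) n (e : 'rV[R]_n -> 'I_n -> R) (k : 'I_n)
  (p : 'rV[R]_n) (i : 'I_n) : R :=
  2^-1 * normal_coef e k p * derive (fun y => e y i) p (coord_vec k) / e p i.

Lemma coord_vecE (R : realType) n (k j : 'I_n) : coord_vec k 0 j = (j == k)%:R :> R.
Proof. by rewrite mxE eqxx. Qed.

Lemma line_coordE (R : realType) n (h : R) (Z y : 'rV[R]_n) j :
  (h *: Z + y) 0 j = h * Z 0 j + y 0 j.
Proof. by rewrite !mxE. Qed.

Section DiagonalMetric.
Variables (R : realType) (d : nat) (e : 'rV[R]_d.+1 -> 'I_d.+1 -> R).
Implicit Types y U W Z : 'rV[R]_d.+1.
Local Notation G := (diag_metric e).

Lemma diag_metricE y i j : G y i j = if i == j then e y i else 0.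
Proof. by rewrite mxE. Qed.

Lemma gprod_diag y U W : gprod G y U W = \sum_i U 0 i * e y i * W 0 i.
Proof.
apply: eq_bigr => i _; rewrite -(sum_if_eq (fun j => U 0 i * e y i * W 0 j)).
by apply: eq_bigr => j _; rewrite diag_metricE; case: eqP => [<-|]; rewrite ?mulr0 ?mul0r.
Qed.

Lemma dmetric_diag_off l y i j : i != j -> dmetric G l y i j = 0.
Proof.
move=> ij; rewrite /dmetric.
have -> : (fun z => G z i j) = cst 0.
  by apply: funext => z; rewrite diag_metricE (negbTE ij).
exact: derive_cst.
Qed.

Lemma dmetric_diag l y i : dmetric G l y i i = derive (fun z => e z i) y (coord_vec l).
Proof.
by rewrite /dmetric; congr derive; apply: funext => z; rewrite diag_metricE eqxx.
Qed.

Section NonDegenerate.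
Variable y : 'rV[R]_d.+1.
Hypothesis e_neq0 : forall i, e y i != 0.

Lemma christoffel_diag mu nu la : christoffel G y mu nu la =
  2^-1 * ((e y mu)^-1 *
    (dmetric G nu y mu la + dmetric G la y mu nu - dmetric G mu y nu la)).
Proof.
rewrite /christoffel invmx_diagf //; congr (_ * _).
rewrite -(sum_if_eq (fun sg => (e y sg)^-1 *
  (dmetric G nu y sg la + dmetric G la y sg nu - dmetric G sg y nu la))).
by apply: eq_bigr => sg _; rewrite mxE; case: eqP => [<-|]; rewrite ?mul0r.
Qed.

Lemma level_normal_diag k : level_normal G k y = normal_coef e k y *: coord_vec k.
Proof.
rewrite /level_normal invmx_diagf // mxE eqxx -scalerA; congr (_ *: _).
apply/rowP => mu; rewrite !mxE eqxx /=.
by case: eqP => [->|]; rewrite ?mulr1 ?mulr0.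
Qed.

End NonDegenerate.

Variables (k : 'I_d.+1) (p : 'rV[R]_d.+1).
(* Nondegeneracy along tangent lines through p is needed because [invmx] of a
   singular matrix is junk, which would break the formula for [level_normal]. *)
Hypothesis e_line_neq0 : forall Z : 'rV[R]_d.+1,
  Z 0 k = 0 -> \forall h \near 0 : R, forall i, e (h *: Z + p) i != 0.
Hypothesis ek_line : forall (Z : 'rV[R]_d.+1) (h : R),
  Z 0 k = 0 -> e (h *: Z + p) k = e p k.

Let e_neq0 i : e p i != 0.
Proof.
have zero_k : (0 : 'rV[R]_d.+1) 0 k = 0 by rewrite mxE.
by have /nbhs_singleton := e_line_neq0 zero_k; rewrite scale0r add0r.
Qed.

Lemma dmetric_normal_col nu sg : nu != k -> dmetric G nu p sg k = 0.
Proof.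
move=> nuk; have [->|sgk] := eqVneq sg k; last exact: dmetric_diag_off.
rewrite dmetric_diag; apply: derive_near_const; apply: (@nearW _ (nbhs (0 : R))) => h.
by apply: ek_line; rewrite coord_vecE eq_sym (negbTE nuk).
Qed.

Lemma derive_level_normal_tangent Z : Z 0 k = 0 -> derive (level_normal G k) p Z = 0.
Proof.
move=> Zk; apply: derive_near_const; apply: filterS (e_line_neq0 Zk) => h eh.
by rewrite !level_normal_diag // /normal_coef ek_line.
Qed.

Lemma covD_level_normal_diag Z : Z 0 k = 0 ->
  covD G (level_normal G k) p Z = \row_mu (principal_curv e k p mu * Z 0 mu).
Proof.
move=> Zk; rewrite /covD derive_level_normal_tangent // add0r level_normal_diag //.
apply/rowP => mu; rewrite !mxE -(sum_if_eq (fun nu => principal_curv e k p nu * Z 0 nu) mu).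
apply: eq_bigr => nu _; rewrite (bigD1 k) //= big1 => [|la lak]; last first.
  by rewrite !mxE /= (negbTE lak) !mulr0.
rewrite addr0 !mxE !eqxx mulr1.
have [->|nuk] := eqVneq nu k; first by rewrite Zk !(mulr0, mul0r) if_same.
rewrite christoffel_diag // dmetric_normal_col // (dmetric_diag_off _ _ nuk) add0r subr0.
have [<-|munu] := eqVneq mu nu; last by rewrite dmetric_diag_off // !(mulr0, mul0r).
by rewrite dmetric_diag /principal_curv; ring.
Qed.

Lemma sff_diag Z W : Z 0 k = 0 ->
  sff G k p Z W = \sum_i principal_curv e k p i * e p i * Z 0 i * W 0 i.
Proof.
move=> Zk; rewrite /sff gprod_diag; apply: eq_bigr => i _.
by rewrite covD_level_normal_diag // mxE; ring.
Qed.

Lemma mean_curv_diag :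
  mean_curv G k p = d%:R^-1 * \sum_(a < d) principal_curv e k p (lift k a).
Proof.
rewrite /mean_curv; congr (_ * _).
have -> : \matrix_(a, b) G p (lift k a) (lift k b) = diagf (fun a => e p (lift k a)).
  by apply/matrixP => a b; rewrite !mxE (inj_eq lift_inj).
have -> : \matrix_(a, b) sff G k p (coord_vec (lift k a)) (coord_vec (lift k b)) =
    diagf (fun a => principal_curv e k p (lift k a) * e p (lift k a)).
  apply/matrixP => a b; rewrite !mxE sff_diag; last first.
    by rewrite coord_vecE (negbTE (neq_lift _ _)).
  rewrite (bigD1 (lift k a)) //= big1 => [|i /negbTE ia]; last first.
    by rewrite coord_vecE ia mulr0 mul0r.
  rewrite !coord_vecE eqxx (inj_eq lift_inj) addr0 mulr1.
  by case: eqP; rewrite ?mulr1 ?mulr0.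
rewrite invmx_diagf // mul_diagf mxtrace_diagf.
by apply: eq_bigr => a _; rewrite mulrCA mulVf ?mulr1.
Qed.

Lemma tf_sff_diag Z : Z 0 k = 0 -> tf_sff G k p Z Z =
  \sum_i (principal_curv e k p i - mean_curv G k p) * e p i * Z 0 i ^+ 2.
Proof.
move=> Zk; rewrite /tf_sff sff_diag // gprod_diag mulr_sumr -sumrB.
by apply: eq_bigr => i _; ring.
Qed.

End DiagonalMetric.

Definition sphere_factor (R : realType) n (s : R -> R) (y : 'rV[R]_n.+1) (i : nat) : R :=
  if (i <= 2)%N then 1
  else s (y 0 (inord 2)) ^+ 2 * \prod_(3 <= j < i) sin (y 0 (inord j)) ^+ 2.

Definition sphere_chart (R : realType) n (s : R -> R) (y : 'rV[R]_n.+1) (m : nat) : Prop :=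
  s (y 0 (inord 2)) != 0 /\ forall j, (3 <= j < m)%N -> sin (y 0 (inord j)) != 0.

Section SphereFactor.
Variables (R : realType) (n : nat) (s : R -> R).
Implicit Types y Z : 'rV[R]_n.+1.

Lemma eq_sphere_factor y y' i :
  (forall j, (2 <= j < i)%N -> y 0 (inord j) = y' 0 (inord j)) ->
  sphere_factor s y i = sphere_factor s y' i.
Proof.
move=> yy'; rewrite /sphere_factor; case: leqP => // i2.
rewrite yy' ?i2 //; congr (_ * _); apply: eq_big_nat => j j3i.
by rewrite yy' //; lia.
Qed.

Lemma sphere_factor_gt0 y m i : sphere_chart s y m -> (i <= m)%N -> 0 < sphere_factor s y i.
Proof.
move=> [s0 sin0] im; rewrite /sphere_factor; case: leqP => // _.
rewrite mulr_gt0 ?exprn_even_gt0 //; rewrite big_nat_cond.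
apply: prodr_gt0 => j /andP[j3i _]; rewrite exprn_even_gt0 // sin0 //; lia.
Qed.

Lemma sphere_chart_near_line Z y m : continuous s -> sphere_chart s y m ->
  \forall h \near 0 : R, sphere_chart s (h *: Z + y) m.
Proof.
move=> s_cont [s0 sin0].
have near_sin : \forall h \near 0 : R, forall j : 'I_m,
    (3 <= j)%N -> sin (h * Z 0 (inord j) + y 0 (inord j)) != 0.
  apply: (@filter_forall R 'I_m _ (nbhs (0 : R)) _) => j.
  case j3 : (3 <= j)%N; last exact: nearW.
  have j3m : (3 <= j < m)%N by rewrite j3 ltn_ord.
  have := near_line_neq0 (Z 0 (inord j)) (@continuous_sin R) (sin0 j j3m).
  by apply: filterS => h hj _.
have near_s := near_line_neq0 (Z 0 (inord 2)) s_cont s0.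
apply: filterS2 near_s near_sin => h hs hsin.
split; first by rewrite line_coordE.
by move=> j /andP[j3 jm]; rewrite line_coordE; exact: (hsin (Ordinal jm)).
Qed.

End SphereFactor.

Section WarpedMetric.
Variables (R : realType) (n : nat) (gtt grr s : R -> R).
Hypotheses (gtt_neg : forall r, gtt r < 0) (grr_pos : forall r, 0 < grr r).
Hypothesis s_cont : continuous s.
Variables (rp : R) (p : 'rV[R]_n.+3).
Hypotheses (rp_gt0 : 0 < rp) (p_on_S : p 0 (inord 1) = rp).
Hypothesis p_chart : sphere_chart s p n.+2.
Implicit Types y Z : 'rV[R]_n.+3.
Local Notation e := (@warped_entry R n.+2 gtt grr s).
Local Notation k := (inord 1 : 'I_n.+3).
Local Notation kappa := (normal_coef e k p / rp).
Local Notation lambda_t := (principal_curv e k p ord0).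

Lemma warped_entry_r y : e y k = grr (y 0 k).
Proof. by rewrite /warped_entry inordK. Qed.

Lemma warped_entry_angular y (i : 'I_n.+3) :
  (2 <= i)%N -> e y i = y 0 k ^+ 2 * sphere_factor s y i.
Proof.
by case: i => [[|[|[|i]]] Hi] //= _; rewrite /warped_entry /sphere_factor /= ?mulr1 ?mulrA.
Qed.

Lemma warped_entry_line_neq0 Z :
  Z 0 k = 0 -> \forall h \near 0 : R, forall i, e (h *: Z + p) i != 0.
Proof.
move=> Zk; apply: filterS (sphere_chart_near_line Z s_cont p_chart) => h chart i.
have [i2|i_lt2] := leqP 2 i.
  rewrite warped_entry_angular // line_coordE Zk mulr0 add0r p_on_S.
  by rewrite mulf_neq0 ?expf_neq0 ?gt_eqF // (sphere_factor_gt0 chart (ltn_ord i)).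
move: i_lt2; case: i => [[|[|//]] Hi] _; rewrite /warped_entry /=.
  by rewrite lt_eqF.
by rewrite gt_eqF.
Qed.

Lemma warped_entry_r_line Z h : Z 0 k = 0 -> e (h *: Z + p) k = e p k.
Proof. by move=> Zk; rewrite !warped_entry_r line_coordE Zk mulr0 add0r. Qed.

Lemma principal_curv_angular (i : 'I_n.+3) : (2 <= i)%N -> principal_curv e k p i = kappa.
Proof.
move=> i2; have sf_gt0 := sphere_factor_gt0 p_chart (ltn_ord i).
have del_i : derive (fun y => e y i) p (coord_vec k) = 2 * rp * sphere_factor s p i.
  apply: derive_line_sqr => h.
  rewrite warped_entry_angular // line_coordE coord_vecE eqxx mulr1 p_on_S.
  congr (_ * _); apply: eq_sphere_factor => j j2i; rewrite line_coordE coord_vecE.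
  have jn : (j < n.+3)%N by have := ltn_ord i; lia.
  have -> : (inord j == k :> 'I_n.+3) = false.
    by apply/negbTE; rewrite -val_eqE /= !inordK //; lia.
  by rewrite mulr0 add0r.
rewrite /principal_curv del_i warped_entry_angular // p_on_S.
by field; rewrite !gt_eqF.
Qed.

Lemma mean_curv_warped :
  mean_curv (warped_metric gtt grr s) k p = (lambda_t + n.+1%:R * kappa) / n.+2%:R.
Proof.
rewrite (mean_curv_diag warped_entry_line_neq0 warped_entry_r_line) big_ord_recl.
have -> : lift k ord0 = ord0 by apply/val_inj; rewrite /= /bump inordK.
rewrite (eq_bigr (fun _ => kappa)) => [|a _]; last first.
  by rewrite principal_curv_angular //= /bump inordK //=; lia.
by rewrite sumr_const card_ord mulr_natl mulrC.
Qed.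

(* The weight of the r-direction is irrelevant, as tangent vectors have no r-component;
   taking g_rr there makes every weight positive. *)
Let w (i : 'I_n.+3) := if i == ord0 then - (n.+1%:R * e p i) else e p i.

Lemma warped_weight_gt0 i : 0 < w i.
Proof.
rewrite /w; have [->|i0] := eqVneq i ord0.
  by rewrite oppr_gt0 pmulr_rlt0 ?ltr0n //; apply: gtt_neg.
have [i2|i_lt2] := leqP 2 i.
  rewrite warped_entry_angular // p_on_S mulr_gt0 ?exprn_gt0 //.
  exact: sphere_factor_gt0 p_chart (ltn_ord i).
by move: i0 i_lt2; case: i => [[|[|//]] Hi] // _ _; apply: grr_pos.
Qed.

Lemma warped_tf_sff Z : Z 0 k = 0 -> tf_sff (warped_metric gtt grr s) k p Z Z =
  (kappa - lambda_t) / n.+2%:R * \sum_i w i * Z 0 i ^+ 2.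
Proof.
move=> Zk; rewrite (tf_sff_diag warped_entry_line_neq0 warped_entry_r_line) //.
rewrite mean_curv_warped mulr_sumr; apply: eq_bigr => i _; rewrite /w.
have [->|i0] := eqVneq i ord0.
  by field; rewrite -natrD pnatr_eq0 (gt_eqF rp_gt0) andbT.
have [->|ik] := eqVneq i k; first by rewrite Zk; ring.
have i2 : (2 <= i)%N by move: i0 ik; rewrite -!val_eqE /= inordK //; lia.
by rewrite principal_curv_angular //; field; rewrite -natrD pnatr_eq0 (gt_eqF rp_gt0) andbT.
Qed.

Lemma warped_tf_sff_definite : exists (D : R) (Q : 'rV[R]_n.+3 -> R),
  (forall Z, Z != 0 -> 0 < Q Z) /\
  forall Z, Z 0 k = 0 -> tf_sff (warped_metric gtt grr s) k p Z Z = D * Q Z.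
Proof.
exists ((kappa - lambda_t) / n.+2%:R), (fun Z => \sum_i w i * Z 0 i ^+ 2).
split=> [Z|]; [exact: sum_wsqr_gt0 warped_weight_gt0 | exact: warped_tf_sff].
Qed.

End WarpedMetric.

Theorem lemma1 (R : realType) (d : nat) (hd : (2 <= d)%N)
    (gtt grr s : R -> R)
    (gtt_smooth : smooth_fun gtt) (grr_smooth : smooth_fun grr)
    (gtt_neg : forall r, gtt r < 0) (grr_pos : forall r, 0 < grr r)
    (hs : s = sin \/ s = id \/ s = @sinhR R)
    (rp : R) (p : 'rV[R]_d.+1)
    (hrp : 0 < rp) (p_on_S : p 0 (inord 1) = rp)
    (p_chart : s (p 0 (inord 2)) != 0 /\
               forall j : nat, (3 <= j < d)%N -> sin (p 0 (inord j)) != 0) :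
  let G := @warped_metric R d gtt grr s in
  let sigma := tf_sff G (inord 1) p in
  forall X Y : 'rV[R]_d.+1,
    tangent_level (inord 1) X -> tangent_level (inord 1) Y ->
    X != 0 -> Y != 0 ->
    [/\ sigma X X = 0 <-> sigma Y Y = 0,
        0 < sigma X X <-> 0 < sigma Y Y
      & sigma X X < 0 <-> sigma Y Y < 0].
Proof.
destruct d as [|[|n]]; [by []|by []|].
move=> G sigma X Y tX tY X0 Y0.
have s_cont : continuous s.
  by case: hs => [->|[->|->]]; [exact: continuous_sin | move=> x; exact: cvg_id |
    exact: continuous_sinhR].
have [D [Q [Q_gt0 sigmaE]]] :=
  warped_tf_sff_definite gtt_neg grr_pos s_cont hrp p_on_S p_chart.
by rewrite /sigma !sigmaE //; apply: pmulr_sign_iff; apply: Q_gt0.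
Qed.
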